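(* Let $R(k_1,k_2)\in\mathrm{End}(\mathbb{C}^N\otimes\mathbb{C}^N)$ satisfy the Yang–Baxter equation and unitarity $R_{12}(k_1,k_2)R_{21}(k_2,k_1)=\mathbb{I}\otimes\mathbb{I}$, let $\mathcal{A}_R$ be its ZF algebra with well-bred vertex operator $T(k)$, and let $B(k)$ be an $N\times N$ matrix with $R_{12}B_1R'_{21}B_2=B_2R'_{12}B_1\bar R_{21}$ and $B(k)B(-k)=\mathbb{I}_N$. Set $b(k)=T(k)B(k)T(-k)^{-1}$, $\tilde a(k)=\frac12(a(k)+b(k)a(-k))$. Let $\mathcal{F}_R$ be the Fock representation of $\mathcal{A}_R$, with vacuum $\Omega$ satisfying $a_i(k)\Omega=0$ for all $i,k$ and $T(k)\Omega=\Omega$ (i.e. $T^{ij}(k)\Omega=\delta_{ij}\Omega$). Then $\mathcal{F}_R$ is a Fock representation of the algebra generated by $\tilde a,\tilde a^\dagger,b$, in the sense that $\tilde a_i(k)\Omega=0$ and $b_{ij}(k)\Omega=B_{ij}(k)\Omega$ for all $i,j,k$.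
   Context: Notation: $R_{12}=R_{12}(k_1,k_2)$, $R_{21}=R_{21}(k_2,k_1)$, $R'_{12}=R_{12}(k_1,-k_2)$, $R'_{21}=R_{21}(k_2,-k_1)$, $\bar R_{21}=R_{21}(-k_2,-k_1)$; $M_1=M(k_1)\otimes\mathbb{I}$, $M_2=\mathbb{I}\otimes M(k_2)$. ZF algebra $\mathcal{A}_R$: generators $a_i(k),a_i^\dagger(k)$, with $a(k)$ column and $a^\dagger(k)$ row vectors, relations $a_1a_2=R_{21}a_2a_1$, $a_1^\dagger a_2^\dagger=a_2^\dagger a_1^\dagger R_{21}$, $a_1a_2^\dagger=a_2^\dagger R_{12}a_1+\delta(k_1-k_2)\sum_ie_i\otimes e_i^\dagger$. Well-bred vertex operator: an invertible matrix $T(k)=\sum T^{ij}(k)E_{ij}$ with entries in (a completion of) $\mathcal{A}_R$ satisfying $T_1a_2=R_{21}a_2T_1$, $T_1a_2^\dagger=a_2^\dagger R_{12}T_1$, $R_{12}T_1T_2=T_2T_1R_{12}$. $b_{ij}(k)$ denotes the $(i,j)$ entry of $b(k)$. *)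

From HB Require Import structures.
From mathcomp Require Import all_boot all_order all_algebra.
From mathcomp Require Import complex reals.
Set Implicit Arguments. Unset Strict Implicit. Unset Printing Implicit Defensive.
Import Order.TTheory GRing.Theory Num.Theory.
Local Open Scope ring_scope.

(* Operators on C^N (x) C^N, in components:
   X i j l m = < e_i (x) e_j | X | e_l (x) e_m >. *)
Definition op4 (C : Type) (N : nat) := 'I_N -> 'I_N -> 'I_N -> 'I_N -> C.

Section Tensor.
Variables (C : pzRingType) (N : nat).

Definition tmul (X Y : op4 C N) : op4 C N :=
  fun i j l m => \sum_(p < N) \sum_(q < N) X i j p q * Y p q l m.

Definition tid : op4 C N := fun i j l m => ((i == l) && (j == m))%:R.

(* M_1 = M (x) I  and  M_2 = I (x) M *)
Definition emb1 (M : 'M[C]_N) : op4 C N := fun i j l m => M i l * (j == m)%:R.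
Definition emb2 (M : 'M[C]_N) : op4 C N := fun i j l m => (i == l)%:R * M j m.

(* X_21 = P X_12 P *)
Definition flip (X : op4 C N) : op4 C N := fun i j l m => X j i m l.

(* Yang--Baxter equation R12(k1,k2) R13(k1,k3) R23(k2,k3)
   = R23(k2,k3) R13(k1,k3) R12(k1,k2), written in components on
   C^N (x) C^N (x) C^N (entry (i,j,k ; l,m,n)). *)
Definition YBE (K : Type) (Rm : K -> K -> op4 C N) : Prop :=
  forall (k1 k2 k3 : K) (i j k l m n : 'I_N),
    \sum_(p < N) \sum_(q < N) \sum_(r < N)
        Rm k1 k2 i j p q * Rm k1 k3 p k l r * Rm k2 k3 q r m n
  = \sum_(p < N) \sum_(q < N) \sum_(r < N)
        Rm k2 k3 j k q r * Rm k1 k3 i r p n * Rm k1 k2 p q l m.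

End Tensor.
Arguments tid {C N}.

From HB Require Import structures.
From mathcomp Require Import all_boot all_order all_algebra.
From mathcomp Require Import complex reals.
Set Implicit Arguments. Unset Strict Implicit. Unset Printing Implicit Defensive.
Import Order.TTheory GRing.Theory Num.Theory.
Local Open Scope ring_scope.

(* Since T(k) fixes the vacuum and T(k)^{-1} T(k) = I, also T(k)^{-1} fixes
   the vacuum, so b(k) = T(k) B(k) T(-k)^{-1} acts on it as the scalar matrix
   B(k). Both summands of ã(k) end with an annihilation operator, so ã(k)
   kills the vacuum. *)

Section VacuumAction.
Variables (K : pzRingType) (A : algType K) (V : lmodType A) (N : nat).
Implicit Types (M : 'I_N -> 'I_N -> A) (v : V).

Definition fixes_vec M v : Prop := forall i j, M i j *: v = (i == j)%:R *: v.

Lemma sum_scale_delta (F : 'I_N -> A) (j : 'I_N) v :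
  \sum_(l < N) F l *: ((l == j)%:R *: v) = F j *: v.
Proof.
rewrite (bigD1 j) //= eqxx scale1r big1 ?addr0 // => l /negbTE ->.
by rewrite scale0r scaler0.
Qed.

Lemma fixes_vec_linv M Minv v :
  (forall i j, \sum_(l < N) Minv i l * M l j = (i == j)%:R) ->
  fixes_vec M v -> fixes_vec Minv v.
Proof.
move=> MinvK Mv i j; rewrite -MinvK scaler_suml.
under eq_bigr => l _ do rewrite -scalerA Mv.
by rewrite sum_scale_delta.
Qed.

Lemma scalarZ_act (c : K) (x : A) v : (c *: x) *: v = c%:A *: (x *: v).
Proof. by rewrite scalerA mulr_algl. Qed.

Lemma conj_scalar_fixes_vec M M' (c : 'I_N -> 'I_N -> K) v :
  fixes_vec M v -> fixes_vec M' v ->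
  forall i j, (\sum_(l < N) \sum_(m < N) M i l * (c l m *: M' m j)) *: v
              = (c i j)%:A *: v.
Proof.
move=> Mv M'v i j; rewrite scaler_suml.
under eq_bigr => l _ do rewrite scaler_suml.
under eq_bigr => l _ do under eq_bigr => m _ do
  rewrite -scalerA scalarZ_act M'v scalerA.
under eq_bigr => l _ do rewrite sum_scale_delta mulr_algr scalarZ_act Mv eq_sym.
by rewrite sum_scale_delta.
Qed.

Lemma sum_mulr_annihilates (x y : 'I_N -> A) v :
  (forall j, y j *: v = 0) -> (\sum_(j < N) x j * y j) *: v = 0.
Proof.
move=> yv; rewrite scaler_suml big1 // => j _.
by rewrite -scalerA yv scaler0.
Qed.

End VacuumAction.

Theorem mainTheorem3
  (R : realType) (N : nat)
  (Rm : R -> R -> op4 R[i] N)                 (* R_12(k1,k2) *)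
  (B : R -> 'M[R[i]]_N)                       (* B(k) *)
  (dlt : R -> R[i])                           (* formal symbol delta(k1-k2) *)
  (A : algType R[i])                          (* (completion of) the ZF algebra *)
  (a adag : R -> 'I_N -> A)                   (* a_i(k), a_i^dagger(k) *)
  (T Tinv : R -> 'I_N -> 'I_N -> A)           (* T^{ij}(k) and (T(k)^{-1})^{ij} *)
  (V : lmodType A) (Omega : V)                (* Fock space and vacuum *)
  (* R-matrix: Yang--Baxter and unitarity *)
  (hYB : YBE Rm)
  (hunit : forall k1 k2, tmul (Rm k1 k2) (flip (Rm k2 k1)) = tid)
  (* ZF relations *)
  (hZFaa : forall k1 k2 (i j : 'I_N),
     a k1 i * a k2 j
     = \sum_(l < N) \sum_(m < N) (flip (Rm k2 k1) i j l m) *: (a k2 m * a k1 l))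
  (hZFdd : forall k1 k2 (i j : 'I_N),
     adag k1 i * adag k2 j
     = \sum_(l < N) \sum_(m < N) (flip (Rm k2 k1) l m i j) *: (adag k2 m * adag k1 l))
  (hZFad : forall k1 k2 (i j : 'I_N),
     a k1 i * adag k2 j
     = \sum_(q < N) \sum_(l < N) (Rm k1 k2 i q l j) *: (adag k2 q * a k1 l)
       + (dlt (k1 - k2) * (i == j)%:R) *: 1)
  (* T is a well-bred vertex operator *)
  (hTinvl : forall k (i j : 'I_N), \sum_(l < N) Tinv k i l * T k l j = (i == j)%:R)
  (hTinvr : forall k (i j : 'I_N), \sum_(l < N) T k i l * Tinv k l j = (i == j)%:R)
  (hTa : forall k1 k2 (i l j : 'I_N),
     T k1 i l * a k2 j
     = \sum_(p < N) \sum_(q < N) (flip (Rm k2 k1) i j p q) *: (a k2 q * T k1 p l))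
  (hTad : forall k1 k2 (i l j : 'I_N),
     T k1 i l * adag k2 j
     = \sum_(q < N) \sum_(p < N) (Rm k1 k2 i q p j) *: (adag k2 q * T k1 p l))
  (hRTT : forall k1 k2 (i j l m : 'I_N),
     \sum_(p < N) \sum_(q < N) (Rm k1 k2 i j p q) *: (T k1 p l * T k2 q m)
     = \sum_(p < N) \sum_(q < N) (Rm k1 k2 p q l m) *: (T k2 j q * T k1 i p))
  (* reflection equation and B(k)B(-k) = I *)
  (hrefl : forall k1 k2,
     tmul (tmul (tmul (Rm k1 k2) (emb1 (B k1))) (flip (Rm k2 (- k1)))) (emb2 (B k2))
     = tmul (tmul (tmul (emb2 (B k2)) (Rm k1 (- k2))) (emb1 (B k1)))
            (flip (Rm (- k2) (- k1))))
  (hBB : forall k, B k *m B (- k) = 1%:M)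
  (* Fock vacuum *)
  (hvac_a : forall k (i : 'I_N), a k i *: Omega = 0)
  (hvac_T : forall k (i j : 'I_N), T k i j *: Omega = (i == j)%:R *: Omega) :
  let b := fun k (i j : 'I_N) =>
    \sum_(l < N) \sum_(m < N) T k i l * ((B k l m) *: Tinv (- k) m j) in
  let atilde := fun k (i : 'I_N) =>
    (2%:R^-1 : R[i]) *: (a k i + \sum_(j < N) b k i j * a (- k) j) in
  (forall k (i : 'I_N), atilde k i *: Omega = 0) /\
  (forall k (i j : 'I_N), b k i j *: Omega = (B k i j)%:A *: Omega).
Proof.
move=> b atilde.
have TinvO k : fixes_vec (Tinv k) Omega := fixes_vec_linv (hTinvl k) (hvac_T k).
have bO k i j : b k i j *: Omega = (B k i j)%:A *: Omega.
  exact: (conj_scalar_fixes_vec (B k) (hvac_T k) (TinvO (- k))).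
split=> [k i|//].
by rewrite /atilde scalarZ_act scalerDl hvac_a add0r
  (sum_mulr_annihilates _ (hvac_a (- k))) scaler0.
Qed.
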